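(* Let $a,b,c\in\mathbb C$ satisfy $b^2=ac+1$ or $b^2=ac-1$. In the field of rational functions $\mathbb C(x_1,\ldots,x_n)$, define for $1\le i,j\le n$ $$f[x_ix_j]=\frac{x_i-x_j}{c+b(x_i+x_j)+a\,x_ix_j}.$$ Then for every even $n$, $$f[x_1x_2\ldots x_n]=\prod_{1\le i<j\le n}\frac{x_i-x_j}{c+b(x_i+x_j)+a\,x_ix_j}.$$ Special cases include $\frac{x-y}{1-xy}$ (take $a=-1$, $b=0$, $c=1$) and $\frac{x-y}{c+x+y}$ for any constant $c$ (take $a=0$, $b=1$).
   Context: Here $f[x_1\ldots x_n]$ denotes the Pfaffian $$f[x_1\ldots x_n]=\sum s(x_1\ldots x_n,y_1\ldots y_n)\,f[y_1y_2]\cdots f[y_{n-1}y_n],$$ where the sum is over all partitions of $\{x_1,\ldots,x_n\}$ into pairs $\{y_1,y_2\},\ldots,\{y_{n-1},y_n\}$. The sign $s(x_1\ldots x_n,y_1\ldots y_n)$ is the sign of the permutation taking $x_1\ldots x_n$ to $y_1\ldots y_n$, and each summand is independent of how the pairing is listed. The denominators are nonzero polynomials, since $(a,b,c)\neq(0,0,0)$. *)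

From HB Require Import structures.
From mathcomp Require Import all_boot all_algebra all_fingroup.
From mathcomp Require Import fraction mpoly.
From mathcomp Require Import complex.
From mathcomp Require Import Rstruct.

Set Implicit Arguments.
Unset Strict Implicit.
Unset Printing Implicit Defensive.
Import GRing.Theory.
Local Open Scope ring_scope.

Definition CC : fieldType := complex.complex Rdefinitions.R.

(* The field of rational functions C(x_1,...,x_n) (variables indexed 0..n-1). *)
Definition ratfun (n : nat) := {fraction {mpoly CC[n]}}.

(* A permutation s of 'I_n lists a partition into pairs
   {s 0, s 1}, {s 2, s 3}, ...  We select the canonical listing of each
   pairing: inside each pair the smaller element comes first, and the pairs
   are ordered by their first elements.  (For even n these permutations are
   in bijection with the partitions of {0,...,n-1} into pairs.) *)
(* i + k as an element of 'I_n (defaults to i if out of range; only used in range) *)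
Definition shiftI (n : nat) (i : 'I_n) (k : nat) : 'I_n := insubd i (i + k)%N.

Definition canonical_pairing (n : nat) (s : 'S_n) : bool :=
  [forall i : 'I_n, (~~ odd i) ==>
     ((i.+1 < n)%N ==> (s i < s (shiftI i 1))%N) &&
     ((i.+2 < n)%N ==> (s i < s (shiftI i 2))%N)].

Definition pfaffian (R : comNzRingType) (n : nat) (f : 'I_n -> 'I_n -> R) : R :=
  \sum_(s : 'S_n | canonical_pairing s)
     (-1) ^+ s * \prod_(i : 'I_n | ~~ odd i) f (s i) (s (shiftI i 1)).

Definition fpair (n : nat) (a b c : CC) (i j : 'I_n) : ratfun n :=
  tofrac ('X_i - 'X_j : {mpoly CC[n]}) /
  tofrac (c%:MP + b%:MP * ('X_i + 'X_j) + a%:MP * ('X_i * 'X_j) : {mpoly CC[n]}).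

From HB Require Import structures.
From mathcomp Require Import all_boot all_algebra all_fingroup.
From mathcomp Require Import fraction mpoly.
From mathcomp Require Import complex.
From mathcomp Require Import Rstruct.
From mathcomp Require Import ring zify.
Import GRing.Theory.
Local Open Scope ring_scope.
Set Implicit Arguments.
Unset Strict Implicit.
Unset Printing Implicit Defensive.

(** Write [Q u v = c + b (u + v) + a u v] and [F u v = (u - v) / Q u v].  Expanding the
    Pfaffian along its first row, the induction step for the points [u, z_1, ..., z_m]
    ([m] odd) reduces to the identity
      [\sum_j W_j * F u z_j = \prod_i F u z_i],  where  [W_j = \prod_(i != j) (F z_j z_i)^-1],
    which is proved jointly with [\sum_j W_j = 0] for an even number of points.
    With [e = b^2 - a c] and [xi u = - (c + b u) / (b + a u)] the root of [Q u], one has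
    [Q (xi u) v = e (v - u) / (b + a u)], hence [(F u v)^-1 = e F (xi u) v]; since [e^2 = 1]
    this turns the even identity for a set into the odd one for the set minus a point [z_0],
    taken at [u = xi z_0].  Cleared of denominators, the odd identity states that a polynomial
    of degree at most [m] in [u] vanishes; it does vanish at the [m] points [xi z_l] and, by the
    even identity, at [z_0]. *)

(** * Expansion of a Pfaffian along its first row *)

Lemma val_shiftI n (i : 'I_n) k :
  shiftI i k = (if (i + k < n)%N then (i + k)%N else nat_of_ord i) :> nat.
Proof. by rewrite /shiftI val_insubd. Qed.

Lemma shiftI_lift0 n (i : 'I_n) k : shiftI (lift ord0 i) k = lift ord0 (shiftI i k) :> 'I_n.+1.
Proof. by apply: val_inj => /=; rewrite !val_shiftI /= /bump /= !add1n addSn ltnS; case: ifP. Qed.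

Lemma ltn_lift n (h : 'I_n.+1) (i j : 'I_n) : (lift h i < lift h j)%N = (i < j)%N.
Proof. by rewrite /= /bump; case: (leqP h i); case: (leqP h j) => /=; lia. Qed.

Definition pairing_cond n (s : 'S_n) (i : 'I_n) : bool :=
  (~~ odd i) ==>
     ((i.+1 < n)%N ==> (s i < s (shiftI i 1))%N) &&
     ((i.+2 < n)%N ==> (s i < s (shiftI i 2))%N).

Lemma canonical_pairingE n (s : 'S_n) : canonical_pairing s = [forall i, pairing_cond s i].
Proof. by []. Qed.

Lemma canonical_pairing_ord0 n (s : 'S_n.+1) : canonical_pairing s -> s ord0 = ord0.
Proof.
(* [s ord0] is the least value of [s]: each [q > 0] is [r + 1] or [r + 2] with [r < q] even. *)
move=> /forallP cond_s.
suff min_s0 (q : 'I_n.+1) : (s ord0 <= s q)%N.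
  by apply: val_inj; have := min_s0 (s^-1 ord0)%g; rewrite permKV leqn0 => /eqP.
have [k] := ubnP (val q); elim: k q => // k IH q; rewrite ltnS => qk.
have [q0 | q_gt0] := posnP q; first by rewrite (_ : q = ord0) //; apply: val_inj.
pose r := (q.-1)./2.*2.
have q_split : q = (r + (odd q.-1).+1)%N :> nat.
  by rewrite addnS addnC odd_double_half prednK.
have r_lt_q : (r < q)%N by rewrite q_split addnS ltnS leq_addr.
have even_r : ~~ odd r by rewrite /r odd_double.
pose ro := Ordinal (ltn_trans r_lt_q (ltn_ord q)).
have /andP [lt1 lt2] := implyP (cond_s ro) even_r.
have s_ro_q : (s ro < s q)%N.
  have shift_q : shiftI ro (odd q.-1).+1 = q.
    by apply: val_inj => /=; rewrite val_shiftI /= -q_split ltn_ord.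
  rewrite -shift_q; move: q_split; case: (odd q.-1) => /= q_split.
    by apply: (implyP lt2); rewrite /ro /= -[r.+2]addn2 -q_split.
  by apply: (implyP lt1); rewrite /ro /= -[r.+1]addn1 -q_split.
exact: leq_trans (IH ro (leq_trans r_lt_q qk)) (ltnW s_ro_q).
Qed.

Section PairingCons.
Variables (n : nat) (j : 'I_n.+1) (t : 'S_n).

(* The pairing [{0, j + 1}] followed by the pairing [t] of the remaining points. *)
Definition pairing_cons : 'S_n.+2 := lift_perm ord0 ord0 (lift_perm ord0 j t).

Lemma pairing_cons0 : pairing_cons ord0 = ord0.
Proof. exact: lift_perm_id. Qed.

Lemma pairing_cons1 : pairing_cons (lift ord0 ord0) = lift ord0 j.
Proof. by rewrite /pairing_cons lift_perm_lift lift_perm_id. Qed.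

Lemma pairing_cons_lift k :
  pairing_cons (lift ord0 (lift ord0 k)) = lift ord0 (lift j (t k)).
Proof. by rewrite /pairing_cons !lift_perm_lift. Qed.

Lemma pairing_cond_cons k :
  pairing_cond pairing_cons (lift ord0 (lift ord0 k)) = pairing_cond t k.
Proof. by rewrite /pairing_cond !shiftI_lift0 !pairing_cons_lift !ltn_lift /= negbK !ltnS. Qed.

Lemma pairing_cons_gt0 x : x != ord0 -> (0 < pairing_cons x)%N.
Proof.
move=> x0; rewrite lt0n; apply: contra x0 => /eqP cons_x0; apply/eqP.
by apply: (@perm_inj _ pairing_cons); rewrite pairing_cons0; apply: val_inj.
Qed.

Lemma canonical_pairing_cons : canonical_pairing pairing_cons = canonical_pairing t.
Proof.
rewrite !canonical_pairingE; apply/forallP/forallP => cond_s k.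
  by rewrite -pairing_cond_cons.
have [k1 ->|->] := unliftP ord0 k; last first.
  rewrite /pairing_cond pairing_cons0 /=; apply/andP; split; last apply/implyP => k_lt;
    by apply: pairing_cons_gt0; rewrite -val_eqE /= val_shiftI ?k_lt.
have [k2 ->|->] := unliftP ord0 k1; first by rewrite pairing_cond_cons.
by rewrite /pairing_cond /=.
Qed.

Lemma prod_pairing_cons (R : comNzRingType) (f : 'I_n.+2 -> 'I_n.+2 -> R) :
  \prod_(i : 'I_n.+2 | ~~ odd i) f (pairing_cons i) (pairing_cons (shiftI i 1)) =
  f ord0 (lift ord0 j) *
  \prod_(k : 'I_n | ~~ odd k) f (lift ord0 (lift j (t k))) (lift ord0 (lift j (t (shiftI k 1)))).
Proof.
rewrite big_mkcond [X in _ = _ * X]big_mkcond !big_ord_recl /=.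
have -> : shiftI (@ord0 n.+1) 1 = lift ord0 ord0 by apply: val_inj; rewrite /= val_shiftI.
rewrite pairing_cons0 pairing_cons1 mul1r; congr (_ * _); apply: eq_bigr => k _.
by rewrite !shiftI_lift0 !pairing_cons_lift add0n negbK.
Qed.

End PairingCons.

Lemma sum_perm_lift (R : nmodType) n (i0 j0 : 'I_n.+1) (P : pred 'S_n.+1)
    (G : 'S_n.+1 -> R) :
  \sum_(s : 'S_n.+1 | (s i0 == j0) && P s) G s =
  \sum_(t : 'S_n | P (lift_perm i0 j0 t)) G (lift_perm i0 j0 t).
Proof.
rewrite (reindex (lift_perm i0 j0)); last first.
  pose restr (s : 'S_n.+1) k := odflt k (unlift (s i0) (s (lift i0 k))).
  have lift_restr (s : 'S_n.+1) k : lift (s i0) (restr s k) = s (lift i0 k).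
    rewrite /restr; have := neq_lift i0 k.
    by rewrite -(can_eq (permK s)) => /unlift_some[] ? ? ->.
  have restr_inj (s : 'S_n.+1) : injective (restr s).
    by move=> k k' /(congr1 (lift (s i0))); rewrite !lift_restr => /perm_inj /lift_inj.
  exists (fun s => perm (restr_inj s)) => [t _ | s /andP [/eqP si0 _]].
    by apply/permP => k; rewrite permE /restr lift_perm_lift lift_perm_id liftK.
  apply/permP => k; case: (unliftP i0 k) => [k'|] ->; rewrite ?lift_perm_id //.
  by rewrite lift_perm_lift -si0 permE lift_restr.
by apply: eq_bigl => t; rewrite lift_perm_id eqxx.
Qed.

Lemma pfaffian_expand (R : comNzRingType) n (f : 'I_n.+2 -> 'I_n.+2 -> R) :
  pfaffian f = \sum_(j < n.+1) (-1) ^+ j * f ord0 (lift ord0 j) *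
     pfaffian (fun k l : 'I_n => f (lift ord0 (lift j k)) (lift ord0 (lift j l))).
Proof.
rewrite /pfaffian (eq_bigl (fun s : 'S_n.+2 => (s ord0 == ord0) && canonical_pairing s)).
  2: by move=> s; case: (boolP (canonical_pairing s)) => [/canonical_pairing_ord0 -> | _];
    rewrite ?eqxx ?andbF.
rewrite sum_perm_lift (partition_big (fun u : 'S_n.+1 => u ord0) predT) //=.
apply: eq_bigr => j _.
rewrite (eq_bigl (fun u : 'S_n.+1 => (u ord0 == j) && canonical_pairing (lift_perm ord0 ord0 u))).
  2: by move=> u; rewrite andbC.
rewrite sum_perm_lift big_distrr /=.
apply: eq_big => [t | t _]; first exact: canonical_pairing_cons.
rewrite (prod_pairing_cons j t f) /pairing_cons !odd_lift_perm /= signr_addb.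
rewrite -[(-1) ^+ (nat_of_ord j)]signr_odd -!mulrA; congr (_ * _).
by rewrite mulrCA.
Qed.

Lemma eq_pfaffian (R : comNzRingType) n (f g : 'I_n -> 'I_n -> R) :
  (forall i j, f i j = g i j) -> pfaffian f = pfaffian g.
Proof.
move=> fg; apply: eq_bigr => s _; congr (_ * _).
by apply: eq_bigr => i _; exact: fg.
Qed.

Lemma pfaffian0 (R : comNzRingType) (f : 'I_0 -> 'I_0 -> R) : pfaffian f = 1.
Proof.
rewrite /pfaffian (big_pred1 1%g) => [|s]; last first.
  by rewrite /pred1 /= (_ : s = 1%g) ?eqxx; [apply/forallP => -[] | apply/permP => -[]].
by rewrite odd_perm1 expr0 mul1r big_pred0 // => -[].
Qed.

(** * Products over pairs *)

Lemma lift_ltn n (j : 'I_n.+1) (k : 'I_n) : (lift j k < j)%N = (k < j)%N.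
Proof. by rewrite /= /bump; case: leqP => /=; lia. Qed.

Lemma prod_sign_ltn (R : pzRingType) m (j : 'I_m.+1) :
  \prod_(k < m) (-1) ^+ (k < j)%N = (-1) ^+ j :> R.
Proof.
rewrite prodrXr -(big_mkord xpredT (fun k => nat_of_bool (k < j)%N)).
rewrite (big_cat_nat (leq0n j)) /=; last by rewrite -ltnS.
rewrite (@eq_big_nat _ _ _ 0 j _ (fun=> 1%N)) => [|k /andP[_ ->]] //.
rewrite (@eq_big_nat _ _ _ j m _ (fun=> 0%N)) => [|k /andP[jk _]]; last by rewrite ltnNge jk.
by rewrite !sum_nat_const_nat muln1 muln0 subn0 addn0.
Qed.

Lemma prod_pairs_lift (R : comPzRingType) m (g : 'I_m.+1 -> 'I_m.+1 -> R) (j : 'I_m.+1) :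
  (forall i l, g l i = - g i l) ->
  \prod_(i < m.+1) \prod_(l < m.+1 | (i < l)%N) g i l =
  (-1) ^+ j * \prod_(k < m) g j (lift j k) *
  \prod_(k < m) \prod_(l < m | (k < l)%N) g (lift j k) (lift j l).
Proof.
move=> g_anti; rewrite (bigD1_ord j) //=.
have row_j : \prod_(l < m.+1 | (j < l)%N) g j l =
    \prod_(k < m) (if (j < lift j k)%N then g j (lift j k) else 1).
  by rewrite big_mkcond (bigD1_ord j) //= ltnn mul1r.
have row_lift k : \prod_(l < m.+1 | (lift j k < l)%N) g (lift j k) l =
    (if (lift j k < j)%N then g (lift j k) j else 1) *
    \prod_(l < m | (k < l)%N) g (lift j k) (lift j l).
  rewrite big_mkcond (bigD1_ord j) //=; congr (_ * _).
  by rewrite [RHS]big_mkcond; apply: eq_bigr => l _; rewrite ltn_lift.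
rewrite row_j (eq_bigr _ (fun k _ => row_lift k)) big_split /= mulrA; congr (_ * _).
rewrite -prod_sign_ltn -!big_split /=; apply: eq_bigr => k _.
rewrite -(lift_ltn j k); case: ltngtP => [jk | kj | eq_jk].
- by rewrite expr0 !mul1r mulr1.
- by rewrite expr1 mul1r mulN1r g_anti.
- by move/eqP: eq_jk; rewrite (negbTE (neq_bump _ _)).
Qed.

Lemma prod_setTD1_lift (R : comPzSemiRingType) m (j : 'I_m.+1) (F : 'I_m.+1 -> R) :
  \prod_(i in [set: 'I_m.+1] :\ j) F i = \prod_(k < m) F (lift j k).
Proof.
rewrite (eq_bigl (fun i => i != j)) => [|i]; last by rewrite !inE andbT.
rewrite big_mkcond (bigD1_ord j) //= eqxx mul1r.
by apply: eq_bigr => k _; rewrite eq_sym neq_lift.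
Qed.

(** * The fractions [(u - v) / (c + b (u + v) + a u v)] *)

Lemma size_prod_leq2 (R : nzSemiRingType) (J : finType) (A : {pred J}) (F : J -> {poly R}) :
  (forall i, i \in A -> (size (F i) <= 2)%N) -> (size (\prod_(i in A) F i)%R <= #|A|.+1)%N.
Proof.
move=> sizeF; apply: leq_trans (size_poly_prod_leq _ _) _.
have : (\sum_(i in A) size (F i) <= \sum_(i in A) 2)%N by apply: leq_sum.
rewrite sum_nat_const (eq_card (B := A)) //; lia.
Qed.

Section PairFraction.
Variables (K : fieldType) (a b c : K).

Definition pden (u v : K) := c + b * (u + v) + a * (u * v).
Definition pfrac (u v : K) := (u - v) / pden u v.
Definition den_lead (u : K) := b + a * u.
Definition den_root (u : K) := - (c + b * u) / den_lead u.
Definition disc := b ^+ 2 - a * c.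

Lemma pdenC u v : pden u v = pden v u.
Proof. by rewrite /pden; ring. Qed.

Lemma pfracC u v : pfrac v u = - pfrac u v.
Proof. by rewrite /pfrac pdenC -opprB mulNr. Qed.

Lemma mul_pfrac_pden u v : pden u v != 0 -> pfrac u v * pden u v = u - v.
Proof. by move=> den_uv; rewrite /pfrac divfK. Qed.

Lemma mul_invf_pfrac u v : u != v -> (u - v) * (pfrac u v)^-1 = pden u v.
Proof. by move=> uv; rewrite invf_div mulrC divfK // subr_eq0. Qed.

Lemma pden_root u : den_lead u != 0 -> pden u (den_root u) = 0.
Proof. by rewrite /pden /den_root /den_lead => hu; field. Qed.

Lemma pden_rootl u v : den_lead u != 0 -> pden (den_root u) v = disc * (v - u) / den_lead u.
Proof. by rewrite /pden /den_root /disc /den_lead => hu; field. Qed.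

Definition pden_poly (u : K) : {poly K} := (den_lead u)%:P * 'X + (c + b * u)%:P.

Lemma horner_pden_poly u t : (pden_poly u).[t] = pden u t.
Proof. by rewrite /pden_poly hornerD hornerMX !hornerC /den_lead /pden; ring. Qed.

Lemma size_pden_poly u : (size (pden_poly u) <= 2)%N.
Proof. by rewrite /pden_poly size_MXaddC; case: ifP => // _; rewrite ltnS size_polyC_leq1. Qed.

Hypothesis disc_sq : disc ^+ 2 = 1.

Lemma disc_neq0 : disc != 0.
Proof. by apply: contra_eq_neq disc_sq => ->; rewrite expr0n eq_sym oner_neq0. Qed.

Lemma disc_expr k : disc ^+ k = disc ^+ odd k.
Proof.
by rewrite -[in LHS](odd_double_half k) exprD -mul2n exprM disc_sq expr1n mulr1.
Qed.

Lemma invf_pfrac_root u v : den_lead u != 0 -> u != v ->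
  (pfrac u v)^-1 = disc * pfrac (den_root u) v.
Proof.
move=> hu uv; have hd := disc_neq0; rewrite invf_div /pfrac pden_rootl //.
move: hu hd; rewrite /pden /den_root /disc /den_lead => hu hd.
by field; rewrite hu hd !subr_eq0 uv eq_sym uv.
Qed.

Lemma pden_root_mul_invf u v : den_lead u != 0 -> u != v ->
  pden v (den_root u) * (pfrac u v)^-1 = disc * (den_root u - v).
Proof.
move=> hu uv; rewrite invf_div pdenC pden_rootl //.
move: hu; rewrite /pden /den_root /disc /den_lead => hu.
by field; rewrite hu !subr_eq0 uv.
Qed.

Section Interpolation.
Variables (I : finType) (z : I -> K).
Hypotheses (z_inj : injective z) (pden_z_neq0 : forall i j, pden (z i) (z j) != 0)
  (den_lead_z_neq0 : forall i, den_lead (z i) != 0).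

Lemma den_root_z_neq i j : den_root (z i) != z j.
Proof. by apply: contra_neq (pden_z_neq0 i j) => <-; rewrite pden_root. Qed.

Lemma den_root_z_inj : injective (fun i => den_root (z i)).
Proof.
move=> i j /= eq_ij; have : pden (den_root (z i)) (z j) = 0 by rewrite eq_ij pdenC pden_root.
move/eqP; rewrite pden_rootl // !mulf_eq0 invr_eq0 (negbTE disc_neq0).
by rewrite (negbTE (den_lead_z_neq0 i)) orbF subr_eq0 => /eqP /z_inj.
Qed.

Lemma pden_den_root_z_neq0 i j : i != j -> pden (den_root (z i)) (z j) != 0.
Proof.
move=> ij; rewrite pden_rootl // !mulf_neq0 ?invr_neq0 ?disc_neq0 //.
by rewrite subr_eq0 (inj_eq z_inj) eq_sym.
Qed.

Definition weight (S : {set I}) (j : I) := \prod_(i in S :\ j) (pfrac (z j) (z i))^-1.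

Lemma weightD1 (S : {set I}) (j0 j : I) : j0 \in S -> j != j0 ->
  weight S j = (pfrac (z j) (z j0))^-1 * weight (S :\ j0) j.
Proof.
move=> j0S jj0; rewrite /weight (big_setD1 j0) ?inE 1?eq_sym ?jj0 //.
by rewrite !setDDl setUC.
Qed.

Lemma sum_weight_eq0_step (S : {set I}) (j0 : I) : j0 \in S -> odd #|S :\ j0| ->
  \sum_(j in S :\ j0) weight (S :\ j0) j * pfrac (den_root (z j0)) (z j) =
    \prod_(i in S :\ j0) pfrac (den_root (z j0)) (z i) ->
  \sum_(j in S) weight S j = 0.
Proof.
move=> j0S; set S' := S :\ j0; set r := den_root (z j0) => oddS' sumS'.
have inv_root i : i \in S' -> (pfrac (z j0) (z i))^-1 = disc * pfrac r (z i).
  by case/setD1P=> ij0 _; rewrite invf_pfrac_root // eq_sym (inj_eq z_inj).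
rewrite (big_setD1 j0 j0S) /=.
have -> : weight S j0 = disc * \prod_(i in S') pfrac r (z i).
  rewrite /weight (eq_bigr _ inv_root) big_split /= prodr_const.
  by rewrite disc_expr oddS'.
have -> : \sum_(j in S') weight S j = - disc * \prod_(i in S') pfrac r (z i).
  rewrite -sumS' mulr_sumr; apply: eq_bigr => j jS'; have [jj0 _] := setD1P jS'.
  by rewrite (weightD1 j0S jj0) (pfracC (z j0)) invrN inv_root //; ring.
by rewrite mulNr addrN.
Qed.

(* At [t = u], this is the odd identity multiplied by [\prod_(i in S) pden u (z i)]. *)
Definition interp_poly (S : {set I}) : {poly K} :=
  \sum_(j in S) weight S j *: (('X - (z j)%:P) * \prod_(i in S :\ j) pden_poly (z i))
  - \prod_(i in S) ('X - (z i)%:P).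

Lemma horner_interp_poly S t : (interp_poly S).[t] =
  \sum_(j in S) weight S j * ((t - z j) * \prod_(i in S :\ j) pden (z i) t)
  - \prod_(i in S) (t - z i).
Proof.
rewrite /interp_poly hornerD hornerN horner_sum horner_prod.
congr (_ - _); last by apply: eq_bigr => i _; rewrite hornerXsubC.
apply: eq_bigr => j _; rewrite hornerZ hornerM hornerXsubC horner_prod.
by under eq_bigr do rewrite horner_pden_poly.
Qed.

Lemma size_interp_poly S : (size (interp_poly S) <= #|S|.+1)%N.
Proof.
rewrite /interp_poly; apply: leq_trans (size_polyD _ _) _.
rewrite size_polyN geq_max size_prod_leq2 ?andbT; last by move=> i _; rewrite size_XsubC.
apply: leq_trans (size_sum _ _ _) _; apply/bigmax_leqP => j jS.
apply: leq_trans (size_scale_leq _ _) _; apply: leq_trans (size_polyMleq _ _) _.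
have := size_prod_leq2 (fun i _ => size_pden_poly (z i)) (A := S :\ j).
by rewrite size_XsubC (cardsD1 j S) jS; lia.
Qed.

Lemma root_interp_poly_den_root (S : {set I}) (l : I) : odd #|S| -> l \in S ->
  root (interp_poly S) (den_root (z l)).
Proof.
move=> oddS lS; set r := den_root (z l).
rewrite /root horner_interp_poly (big_setD1 l lS) /= [X in _ + X - _]big1 ?addr0; last first.
  move=> j /setD1P [jl jS]; rewrite (big_setD1 l) /=; last by rewrite !inE eq_sym jl lS.
  by rewrite pden_root // mul0r !mulr0.
suff -> : weight S l * ((r - z l) * \prod_(i in S :\ l) pden (z i) r) = \prod_(i in S) (r - z i).
  by rewrite subrr.
rewrite /weight (big_setD1 l lS) /= mulrCA -big_split /=; congr (_ * _).
rewrite (eq_bigr (fun i => disc * (r - z i))); last first.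
  by move=> i /setD1P [il _]; rewrite mulrC pden_root_mul_invf // (inj_eq z_inj) eq_sym.
move: oddS; rewrite (cardsD1 l S) lS /= => /negbTE evenS'.
by rewrite big_split /= prodr_const disc_expr evenS' mul1r.
Qed.

Lemma root_interp_poly_z (S : {set I}) (j0 : I) : j0 \in S ->
  \sum_(j in S :\ j0) weight (S :\ j0) j = 0 -> root (interp_poly S) (z j0).
Proof.
move=> j0S sumS'; rewrite /root horner_interp_poly (big_setD1 j0 j0S).
rewrite [X in _ - X](big_setD1 j0 j0S) /= !subrr !mul0r mulr0 add0r subr0.
rewrite (eq_bigr (fun j => - (pden (z j0) (z j0) * \prod_(i in S :\ j0) pden (z i) (z j0))
   * weight (S :\ j0) j)); first by rewrite -mulr_sumr sumS' mulr0.
move=> j /setD1P [jj0 jS].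
have inv_pfrac : (z j0 - z j) * (pfrac (z j) (z j0))^-1 = - pden (z j) (z j0).
  by rewrite pfracC invrN mulrN mul_invf_pfrac 1?pdenC // (inj_eq z_inj) eq_sym.
rewrite (weightD1 j0S jj0) (big_setD1 j0) /=; last by rewrite !inE eq_sym jj0 j0S.
have -> : S :\ j :\ j0 = S :\ j0 :\ j by rewrite !setDDl setUC.
rewrite [in RHS](big_setD1 j) /=; last by rewrite !inE jj0 jS.
transitivity ((z j0 - z j) * (pfrac (z j) (z j0))^-1 * weight (S :\ j0) j *
  (pden (z j0) (z j0) * \prod_(i in S :\ j0 :\ j) pden (z i) (z j0))); first ring.
by rewrite inv_pfrac; ring.
Qed.

Lemma interp_poly_eq0 (S : {set I}) (j0 : I) : odd #|S| -> j0 \in S ->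
  \sum_(j in S :\ j0) weight (S :\ j0) j = 0 -> interp_poly S = 0.
Proof.
move=> oddS j0S sumS'.
apply: (@roots_geq_poly_eq0 _ _ (z j0 :: [seq den_root (z l) | l <- enum S])) => /=.
- rewrite root_interp_poly_z //=; apply/allP => _ /mapP [l lS ->].
  by rewrite root_interp_poly_den_root // -mem_enum.
- rewrite map_inj_uniq ?enum_uniq ?andbT; last exact: den_root_z_inj.
  by apply/mapP => -[l _ eq_root]; move: (den_root_z_neq l j0); rewrite -eq_root eqxx.
- by rewrite size_map -cardE size_interp_poly.
Qed.

Lemma sum_weight_pfrac_step (S : {set I}) (j0 : I) (u : K) : odd #|S| -> j0 \in S ->
  \sum_(j in S :\ j0) weight (S :\ j0) j = 0 ->
  (forall i, i \in S -> pden u (z i) != 0) ->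
  \sum_(j in S) weight S j * pfrac u (z j) = \prod_(i in S) pfrac u (z i).
Proof.
move=> oddS j0S sumS' uS.
have prod_neq0 : \prod_(i in S) pden u (z i) != 0 by apply/prodf_neq0.
apply: (mulIf prod_neq0); rewrite -big_split /=.
rewrite [in RHS](eq_bigr (fun i => u - z i)); last by move=> i iS; rewrite mul_pfrac_pden ?uS.
have /eqP := horner_interp_poly S u.
rewrite (interp_poly_eq0 oddS j0S sumS') horner0 eq_sym subr_eq0 => /eqP <-.
rewrite mulr_suml; apply: eq_bigr => j jS.
rewrite (big_setD1 j jS) /= -(mul_pfrac_pden (uS j jS)).
under [in RHS]eq_bigr do rewrite pdenC.
ring.
Qed.

Lemma sum_weight_pfrac (S : {set I}) (u : K) : odd #|S| ->
  (forall i, i \in S -> pden u (z i) != 0) ->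
  \sum_(j in S) weight S j * pfrac u (z j) = \prod_(i in S) pfrac u (z i).
Proof.
suff weight_sums (T : {set I}) : (~~ odd #|T| -> \sum_(j in T) weight T j = 0) /\
    (odd #|T| -> forall v, (forall i, i \in T -> pden v (z i) != 0) ->
       \sum_(j in T) weight T j * pfrac v (z j) = \prod_(i in T) pfrac v (z i)).
  by move=> oddS; case: (weight_sums S) => _; apply.
have [m] := ubnP #|T|; elim: m T => // m IH T; rewrite ltnS => leTm.
have [-> | [j0 j0T]] := set_0Vmem T.
  by rewrite cards0; split=> // _; rewrite big_set0.
have cardT : #|T| = #|T :\ j0|.+1 by rewrite (cardsD1 j0 T) j0T.
have /IH [IHeven IHodd] : (#|T :\ j0| < m)%N by rewrite -cardT.
split=> [evenT | oddT v vT].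
  have oddT' : odd #|T :\ j0| by move: evenT; rewrite cardT negbK.
  apply: (sum_weight_eq0_step j0T oddT'); apply: IHodd => // i /setD1P [ij0 _].
  by apply: pden_den_root_z_neq0; rewrite eq_sym.
by apply: (sum_weight_pfrac_step oddT j0T) => //; apply: IHeven; move: oddT; rewrite cardT.
Qed.

End Interpolation.

Lemma pfrac_neq0 u v : u != v -> pden u v != 0 -> pfrac u v != 0.
Proof. by move=> uv den_uv; rewrite mulf_neq0 ?invr_eq0 // subr_eq0. Qed.

Lemma pfaffian_pfrac n (x : 'I_n -> K) : ~~ odd n -> injective x ->
  (forall i j, pden (x i) (x j) != 0) -> (forall i, den_lead (x i) != 0) ->
  pfaffian (fun i j => pfrac (x i) (x j)) =
  \prod_(i < n) \prod_(j < n | (i < j)%N) pfrac (x i) (x j).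
Proof.
have [m] := ubnP n; elim: m n x => // m IH [|[|n]] x n_lt //= even_n x_inj x_den x_lead.
  by rewrite pfaffian0 big_ord0.
pose z i := x (lift ord0 i).
have z_inj : injective z by move=> i j /x_inj /lift_inj.
rewrite pfaffian_expand (prod_pairs_lift ord0 (fun i l => pfracC _ _)) expr0 mul1r.
set Pz := \prod_(k < n.+1) \prod_(l < n.+1 | _) _.
have minor (j : 'I_n.+1) : (-1) ^+ j *
    pfaffian (fun k l : 'I_n => pfrac (x (lift ord0 (lift j k))) (x (lift ord0 (lift j l)))) =
    Pz * weight z [set: 'I_n.+1] j.
  rewrite IH //; [|lia|by rewrite negbK in even_n|by move=> i l /z_inj /lift_inj].
  rewrite /Pz (prod_pairs_lift j (fun i l => pfracC _ _)) /weight prod_setTD1_lift.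
  have inv_prod : \prod_(k < n) pfrac (z j) (z (lift j k)) *
      \prod_(k < n) (pfrac (z j) (z (lift j k)))^-1 = 1.
    rewrite -big_split; apply: big1 => k _ /=; rewrite divff // pfrac_neq0 ?x_den //.
    by rewrite (inj_eq z_inj) neq_lift.
  by rewrite mulrAC; congr (_ * _); rewrite -mulrA inv_prod mulr1.
transitivity (Pz * \sum_(j in [set: 'I_n.+1]) weight z [set: 'I_n.+1] j * pfrac (x ord0) (z j)).
  rewrite mulr_sumr; apply: eq_big => [j | j _]; first by rewrite in_setT.
  by rewrite [RHS]mulrA -minor mulrAC.
rewrite (sum_weight_pfrac z_inj (fun i j => x_den _ _) (fun i => x_lead _)).
- by rewrite mulrC; congr (_ * _); apply: eq_bigl => i; rewrite in_setT.
- by rewrite cardsT card_ord /=; rewrite negbK in even_n.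
- by move=> i _; apply: x_den.
Qed.

End PairFraction.

(** * Rational functions *)

(* The hypothesis on [2] is needed: [a = c = 0], [b = 1] in characteristic [2]. *)
Lemma exists_pden_diag_neq0 (K : fieldType) (a b c : K) : 2%:R != 0 :> K ->
  disc a b c != 0 -> exists t, pden a b c t t != 0.
Proof.
move=> two_neq0 disc_neq0.
have [c0 | c_neq0] := eqVneq c 0; last by exists 0; rewrite /pden !(mulr0, addr0).
have [den1 | ] := eqVneq (pden a b c 1 1) 0; last by exists 1.
have [den_1 | ] := eqVneq (pden a b c (-1) (-1)) 0; last by exists (-1).
have : pden a b c 1 1 - pden a b c (-1) (-1) = b * (2%:R * 2%:R) by rewrite /pden; ring.
rewrite den1 den_1 subrr => /esym /eqP; rewrite !mulf_eq0 (negbTE two_neq0) !orbF => /eqP b0.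
by move: disc_neq0; rewrite /disc b0 c0 expr2 !mul0r mulr0 subrr eqxx.
Qed.

Lemma exists_den_lead_neq0 (K : fieldType) (a b c : K) :
  disc a b c != 0 -> exists t, den_lead a b t != 0.
Proof.
move=> disc_neq0; have [b0 | ] := eqVneq b 0; last by exists 0; rewrite /den_lead mulr0 addr0.
exists 1; rewrite /den_lead b0 add0r mulr1; apply: contraNneq disc_neq0 => a0.
by rewrite /disc a0 b0 expr2 !mul0r subrr.
Qed.

Section RationalFunctions.
Variables (K : fieldType) (n : nat).

Local Notation C y := (tofrac (y%:MP : {mpoly K[n]})).
Local Notation X i := (tofrac ('X_i : {mpoly K[n]})).

Lemma tofrac_neq0_meval (p : {mpoly K[n]}) (v : 'I_n -> K) : meval v p != 0 -> tofrac p != 0.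
Proof. by rewrite tofrac_eq0; apply: contraNneq => ->; rewrite raddf0. Qed.

Lemma tofrac_X_inj : injective (fun i : 'I_n => X i).
Proof.
move=> i j /eqP; rewrite tofrac_eq => /eqP /(congr1 (meval (fun k => (k == i)%:R))).
by rewrite !mevalXU eqxx; case: (j =P i) => [-> //| _] /eqP; rewrite oner_eq0.
Qed.

Variables (a b c : K).

Lemma disc_C : disc (C a) (C b) (C c) = C (disc a b c).
Proof. by rewrite /disc !(rmorphB, rmorphM, rmorphXn). Qed.

Hypotheses (two_neq0 : 2%:R != 0 :> K) (disc_neq0 : disc a b c != 0).

Lemma pden_X_neq0 i j : pden (C a) (C b) (C c) (X i) (X j) != 0.
Proof.
have [t den_t] := exists_pden_diag_neq0 two_neq0 disc_neq0.
rewrite /pden -!(rmorphD, rmorphM); apply: (tofrac_neq0_meval (v := fun=> t)).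
by rewrite !(rmorphD, rmorphM) /= !mevalC !mevalXU.
Qed.

Lemma den_lead_X_neq0 i : den_lead (C a) (C b) (X i) != 0.
Proof.
have [t lead_t] := exists_den_lead_neq0 disc_neq0.
rewrite /den_lead -!(rmorphD, rmorphM); apply: (tofrac_neq0_meval (v := fun=> t)).
by rewrite !(rmorphD, rmorphM) /= !mevalC !mevalXU.
Qed.

End RationalFunctions.

Lemma fpairE (a b c : CC) n (i j : 'I_n) : fpair a b c i j =
  pfrac (tofrac a%:MP) (tofrac b%:MP) (tofrac c%:MP) (tofrac 'X_i) (tofrac 'X_j).
Proof. by rewrite /fpair /pfrac /pden !(rmorphB, rmorphD, rmorphM). Qed.

Theorem mainTheorem11 (a b c : CC) (n : nat) :
  (b ^+ 2 = a * c + 1 \/ b ^+ 2 = a * c - 1) ->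
  ~~ odd n ->
  pfaffian (fpair a b c) =
  \prod_(i < n) \prod_(j < n | (i < j)%N) fpair a b c i j.
Proof.
move=> disc_pm1 even_n.
have disc_sq : disc a b c ^+ 2 = 1 by rewrite /disc; case: disc_pm1 => ->; ring.
have two_neq0 : 2%:R != 0 :> CC by rewrite Num.Theory.pnatr_eq0.
rewrite (eq_pfaffian (@fpairE a b c n)).
under eq_bigr do under eq_bigr do rewrite fpairE.
apply: pfaffian_pfrac => //.
- by rewrite disc_C -!rmorphXn disc_sq !rmorph1.
- exact: tofrac_X_inj.
- exact: pden_X_neq0 two_neq0 (disc_neq0 disc_sq).
- exact: den_lead_X_neq0 (disc_neq0 disc_sq).
Qed.
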